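(* Let $(G,O)$ be an equipped group and $s_1,s_2\in S(G,O)$. The following are equivalent: (i) $s_1$ and $s_2$ are $r$-equivalent; (ii) $s_1$ and $s_2$ are $l$-equivalent; (iii) $s_1$ and $s_2$ are equivalent.
   Context: An equipped group is a pair $(G,O)$, $G$ a group, $O\subset G$ a union of finitely many conjugacy classes, $1\notin O$. The factorization semigroup $S(G,O)$ is generated by symbols $x_g$, $g\in O$, subject to $x_{g_1}x_{g_2}=x_{g_2}x_{g_2^{-1}g_1g_2}=x_{g_1g_2g_1^{-1}}x_{g_1}$ ($g_1,g_2\in O$). Elements $s_1,s_2$ of a semigroup $S$ are $r$-equivalent (resp. $l$-equivalent) if there is $s_3\in S$ with $s_1s_3=s_2s_3$ (resp. $s_3s_1=s_3s_2$), and equivalent if there are $s_3,s_4\in S$ with $s_3s_1s_4=s_3s_2s_4$. *)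

From Stdlib Require Import List Relations.
Import ListNotations.

Record group := Group {
  gcar :> Type;
  gmul : gcar -> gcar -> gcar;
  gone : gcar;
  ginv : gcar -> gcar;
  gmulA : forall x y z, gmul x (gmul y z) = gmul (gmul x y) z;
  gmul1l : forall x, gmul gone x = x;
  gmulVl : forall x, gmul (ginv x) x = gone
}.
Arguments gmul {g}. Arguments gone {g}. Arguments ginv {g}.

Definition conjugate {G : group} (g g' : G) : Prop :=
  exists h : G, g' = gmul (gmul (ginv h) g) h.

Definition equipped (G : group) (O : G -> Prop) : Prop :=
  (exists reps : list G, forall g : G, O g <-> exists r, In r reps /\ conjugate r g)
  /\ ~ O gone.

(** Words representing elements of the factorization semigroup S(G,O):
    nonempty words in the letters x_g, g in O. *)
Definition fword {G : group} (O : G -> Prop) (w : list G) : Prop :=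
  w <> [] /\ Forall O w.

Inductive fstep {G : group} (O : G -> Prop) : list G -> list G -> Prop :=
| fstep_r (u v : list G) (a b : G) :
    Forall O u -> Forall O v -> O a -> O b ->
    fstep O (u ++ a :: b :: v) (u ++ b :: gmul (gmul (ginv b) a) b :: v)
| fstep_l (u v : list G) (a b : G) :
    Forall O u -> Forall O v -> O a -> O b ->
    fstep O (u ++ a :: b :: v) (u ++ gmul (gmul a b) (ginv a) :: a :: v).

(** Equality in S(G,O): the congruence generated by the relations. *)
Definition feq {G : group} (O : G -> Prop) : relation (list G) :=
  clos_refl_sym_trans (list G) (fstep O).

Definition r_equiv {G : group} (O : G -> Prop) (s1 s2 : list G) : Prop :=
  exists s3, fword O s3 /\ feq O (s1 ++ s3) (s2 ++ s3).

Definition l_equiv {G : group} (O : G -> Prop) (s1 s2 : list G) : Prop :=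
  exists s3, fword O s3 /\ feq O (s3 ++ s1) (s3 ++ s2).

Definition s_equiv {G : group} (O : G -> Prop) (s1 s2 : list G) : Prop :=
  exists s3 s4, fword O s3 /\ fword O s4 /\ feq O (s3 ++ s1 ++ s4) (s3 ++ s2 ++ s4).

(** The product map [gprod : S(G,O) -> G] is invariant under the relations, so
    each of the three equivalences forces [gprod s1 = gprod s2] by cancellation in
    [G].  Conversely, iterating [x_a x_b = x_b x_{b^-1 a b}] moves a whole word
    across another: [w s ~ s w^(gprod s)] and [s w ~ w^(gprod s)^-1 s], where [w^h]
    conjugates every letter by [h]; the conjugated word depends on [s] only
    through [gprod s].  Hence a common right factor of [s1] and [s2] can be moved
    to a common left factor and back, and the right factor of a two-sided
    equivalence can be moved to the left. *)

From Stdlib Require Import List Relations.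
Import ListNotations.

Section GroupFacts.
Variable G : group.

Lemma gmulV (x : G) : gmul x (ginv x) = gone.
Proof.
  assert (Hidem : gmul (gmul x (ginv x)) (gmul x (ginv x)) = gmul x (ginv x)).
  { rewrite <- gmulA, (gmulA _ (ginv x) x), gmulVl, gmul1l. reflexivity. }
  rewrite <- (gmul1l _ (gmul x (ginv x))), <- (gmulVl _ (gmul x (ginv x))) at 1.
  rewrite <- gmulA, Hidem. apply gmulVl.
Qed.

Lemma gmul1r (x : G) : gmul x gone = x.
Proof. rewrite <- (gmulVl _ x), gmulA, gmulV. apply gmul1l. Qed.

Lemma gmul_lcancel (a x y : G) : gmul a x = gmul a y -> x = y.
Proof.
  intro H. rewrite <- (gmul1l _ x), <- (gmul1l _ y), <- (gmulVl _ a), <- !gmulA, H.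
  reflexivity.
Qed.

Lemma gmul_rcancel (a x y : G) : gmul x a = gmul y a -> x = y.
Proof.
  intro H. rewrite <- (gmul1r x), <- (gmul1r y), <- (gmulV a), !gmulA, H.
  reflexivity.
Qed.

Lemma ginvM (x y : G) : ginv (gmul x y) = gmul (ginv y) (ginv x).
Proof.
  apply (gmul_lcancel (gmul x y)).
  rewrite gmulV, gmulA, <- (gmulA _ x y (ginv y)), gmulV, gmul1r, gmulV.
  reflexivity.
Qed.

Lemma ginv1 : ginv (gone : G) = gone.
Proof. rewrite <- (gmulVl _ gone) at 2. rewrite gmul1r. reflexivity. Qed.

Definition gconj (h a : G) : G := gmul (gmul (ginv h) a) h.

Lemma gconjM (h k a : G) : gconj h (gconj k a) = gconj (gmul k h) a.
Proof. unfold gconj. rewrite ginvM, !gmulA. reflexivity. Qed.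

Lemma gconj1 (a : G) : gconj gone a = a.
Proof. unfold gconj. rewrite ginv1, gmul1l, gmul1r. reflexivity. Qed.

Lemma gconjVK (h a : G) : gconj h (gconj (ginv h) a) = a.
Proof. rewrite gconjM, gmulVl. apply gconj1. Qed.

Definition gprod (w : list G) : G := fold_right gmul gone w.

Lemma gprod_app (u v : list G) : gprod (u ++ v) = gmul (gprod u) (gprod v).
Proof.
  induction u as [|a u IH]; simpl.
  - symmetry; apply gmul1l.
  - unfold gprod in *. rewrite IH. apply gmulA.
Qed.

Lemma map_gconjVK (h : G) (w : list G) :
  map (gconj h) (map (gconj (ginv h)) w) = w.
Proof.
  rewrite map_map. induction w as [|a w IH]; simpl; [reflexivity|].
  rewrite gconjVK, IH. reflexivity.
Qed.

End GroupFacts.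

Arguments gconj {G}.
Arguments gprod {G}.

Section FactorizationSemigroup.
Variables (G : group) (O : G -> Prop).

Lemma fstep_gprod (x y : list G) : fstep O x y -> gprod x = gprod y.
Proof.
  intros [u v a b _ _ _ _ | u v a b _ _ _ _]; rewrite !gprod_app; f_equal; simpl;
    fold (gprod v); rewrite !gmulA.
  - rewrite gmulV, gmul1l. reflexivity.
  - rewrite <- (gmulA _ (gmul a b) (ginv a) a), gmulVl, gmul1r. reflexivity.
Qed.

Lemma feq_gprod (x y : list G) : feq O x y -> gprod x = gprod y.
Proof.
  induction 1 as [x y Hxy | | | x y z _ IHxy _ IHyz].
  - exact (fstep_gprod x y Hxy).
  - reflexivity.
  - symmetry; assumption.
  - rewrite IHxy; exact IHyz.
Qed.

Lemma feq_gprod_cancel (u v s1 s2 : list G) :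
  feq O (u ++ s1 ++ v) (u ++ s2 ++ v) -> gprod s1 = gprod s2.
Proof.
  intro H. apply feq_gprod in H. rewrite !gprod_app in H.
  exact (gmul_rcancel _ _ _ _ (gmul_lcancel _ _ _ _ H)).
Qed.

Lemma fstep_cong (p q x y : list G) : Forall O p -> Forall O q ->
  fstep O x y -> fstep O (p ++ x ++ q) (p ++ y ++ q).
Proof.
  intros Hp Hq [u v a b Hu Hv Ha Hb | u v a b Hu Hv Ha Hb];
    rewrite <- !app_assoc; simpl; rewrite !(app_assoc p u);
    constructor; trivial; apply Forall_app; split; assumption.
Qed.

Lemma feq_cong (p q x y : list G) : Forall O p -> Forall O q ->
  feq O x y -> feq O (p ++ x ++ q) (p ++ y ++ q).
Proof.
  intros Hp Hq. induction 1.
  - apply rst_step, fstep_cong; assumption.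
  - apply rst_refl.
  - apply rst_sym; assumption.
  - eapply rst_trans; eassumption.
Qed.

Lemma feq_prefix (p x y : list G) : Forall O p -> feq O x y -> feq O (p ++ x) (p ++ y).
Proof.
  intros Hp H. pose proof (feq_cong p [] x y Hp (Forall_nil _) H) as Hc.
  rewrite !app_nil_r in Hc. exact Hc.
Qed.

Lemma feq_suffix (q x y : list G) : Forall O q -> feq O x y -> feq O (x ++ q) (y ++ q).
Proof. intros Hq. exact (feq_cong [] q x y (Forall_nil _) Hq). Qed.

Hypothesis HO : equipped G O.

Lemma equipped_gconj (h a : G) : O a -> O (gconj h a).
Proof.
  destruct HO as [[reps Hreps] _]. intros Ha.
  apply Hreps in Ha as [r [Hr [k ->]]].
  apply Hreps. exists r. split; [exact Hr|]. exists (gmul k h).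
  fold (gconj k r). apply gconjM.
Qed.

Lemma Forall_gconj (h : G) (w : list G) : Forall O w -> Forall O (map (gconj h) w).
Proof. intro Hw. apply Forall_map. eapply Forall_impl; [|exact Hw]. apply equipped_gconj. Qed.

Lemma fword_gconj (h : G) (w : list G) : fword O w -> fword O (map (gconj h) w).
Proof.
  intros [Hne Hw]. split; [|exact (Forall_gconj h w Hw)].
  destruct w; [contradiction | discriminate].
Qed.

Lemma feq_letter_shift (a : G) (s : list G) : O a -> Forall O s ->
  feq O (a :: s) (s ++ [gconj (gprod s) a]).
Proof.
  revert a; induction s as [|b s IH]; intros a Ha Hs; simpl.
  - rewrite gconj1. apply rst_refl.
  - inversion Hs as [|? ? Hb Hs']; subst.
    eapply rst_trans.
    { apply rst_step. exact (fstep_r O [] s a b (Forall_nil _) Hs' Ha Hb). }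
    simpl. rewrite <- gconjM.
    apply (feq_prefix [b] (gconj b a :: s)); [now constructor|].
    apply IH; [apply equipped_gconj|]; assumption.
Qed.

Lemma feq_shift_right (w s : list G) : Forall O w -> Forall O s ->
  feq O (w ++ s) (s ++ map (gconj (gprod s)) w).
Proof.
  induction w as [|a w IH]; intros Hw Hs; simpl.
  - rewrite app_nil_r. apply rst_refl.
  - inversion Hw as [|? ? Ha Hw']; subst.
    apply rst_trans with (a :: s ++ map (gconj (gprod s)) w).
    + apply (feq_prefix [a]); [now constructor | apply IH; assumption].
    + replace (s ++ gconj (gprod s) a :: map (gconj (gprod s)) w)
        with ((s ++ [gconj (gprod s) a]) ++ map (gconj (gprod s)) w)
        by (rewrite <- app_assoc; reflexivity).
      apply (feq_suffix _ (a :: s)); [apply Forall_gconj; assumption|].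
      apply feq_letter_shift; assumption.
Qed.

Lemma feq_shift_left (s w : list G) : Forall O s -> Forall O w ->
  feq O (s ++ w) (map (gconj (ginv (gprod s))) w ++ s).
Proof.
  intros Hs Hw. apply rst_sym.
  rewrite <- (map_gconjVK _ (gprod s) w) at 2.
  apply feq_shift_right; [apply Forall_gconj |]; assumption.
Qed.

Section Equivalences.
Variables s1 s2 : list G.
Hypotheses (Hs1 : Forall O s1) (Hs2 : Forall O s2).

Lemma r_equiv_l_equiv : r_equiv O s1 s2 -> l_equiv O s1 s2.
Proof.
  intros [w [Hw Heq]].
  assert (Hpi : gprod s1 = gprod s2) by exact (feq_gprod_cancel [] w s1 s2 Heq).
  exists (map (gconj (ginv (gprod s1))) w). split; [apply fword_gconj, Hw|].
  destruct Hw as [_ Hw].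
  eapply rst_trans; [apply rst_sym, feq_shift_left; eassumption|].
  eapply rst_trans; [exact Heq|].
  rewrite Hpi. apply feq_shift_left; assumption.
Qed.

Lemma l_equiv_r_equiv : l_equiv O s1 s2 -> r_equiv O s1 s2.
Proof.
  intros [w [Hw Heq]].
  assert (Hpi : gprod s1 = gprod s2).
  { apply (feq_gprod_cancel w [] s1 s2). rewrite !app_nil_r. exact Heq. }
  exists (map (gconj (gprod s1)) w). split; [apply fword_gconj, Hw|].
  destruct Hw as [_ Hw].
  eapply rst_trans; [apply rst_sym, feq_shift_right; eassumption|].
  eapply rst_trans; [exact Heq|].
  rewrite Hpi. apply feq_shift_right; assumption.
Qed.

Lemma l_equiv_s_equiv (s4 : list G) : fword O s4 -> l_equiv O s1 s2 -> s_equiv O s1 s2.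
Proof.
  intros Hs4 [w [Hw Heq]]. exists w, s4. split; [exact Hw|]. split; [exact Hs4|].
  rewrite !app_assoc. apply feq_suffix; [apply Hs4 | exact Heq].
Qed.

Lemma s_equiv_l_equiv : s_equiv O s1 s2 -> l_equiv O s1 s2.
Proof.
  intros [u [w [[Hne Hu] [Hw Heq]]]].
  assert (Hpi : gprod s1 = gprod s2) by exact (feq_gprod_cancel u w s1 s2 Heq).
  set (t := map (gconj (ginv (gprod s1))) w).
  exists (u ++ t). split.
  { split; [destruct u; [contradiction | discriminate]|].
    apply Forall_app; split; [exact Hu | apply Forall_gconj, Hw]. }
  destruct Hw as [_ Hw]. rewrite <- !app_assoc.
  eapply rst_trans; [apply feq_prefix, rst_sym, feq_shift_left; eassumption|].
  eapply rst_trans; [exact Heq|].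
  apply feq_prefix; [exact Hu|]. unfold t; rewrite Hpi.
  apply feq_shift_left; assumption.
Qed.

End Equivalences.
End FactorizationSemigroup.

Theorem lemma3p1 (G : group) (O : G -> Prop) (HO : equipped G O)
  (s1 s2 : list G) (h1 : fword O s1) (h2 : fword O s2) :
  (r_equiv O s1 s2 <-> l_equiv O s1 s2) /\ (l_equiv O s1 s2 <-> s_equiv O s1 s2).
Proof.
  destruct h1 as [ne1 F1], h2 as [ne2 F2].
  split; split.
  - exact (r_equiv_l_equiv G O HO s1 s2 F1 F2).
  - exact (l_equiv_r_equiv G O HO s1 s2 F1 F2).
  - exact (l_equiv_s_equiv G O s1 s2 s1 (conj ne1 F1)).
  - exact (s_equiv_l_equiv G O HO s1 s2 F1 F2).
Qed.
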